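(* Let $(\mathcal{A},\varphi)$ be a non-commutative space and let $(\mathcal{A}_{1,\ell},\mathcal{A}_{1,r})$ and $(\mathcal{A}_{2,\ell},\mathcal{A}_{2,r})$ be pairs of subalgebras of $\mathcal{A}$ which are bi-monotonically independent (in the order $1<2$) with respect to $\varphi$. Let $n\ge 1$, $\chi:\{1,\dots,n\}\to\{\ell,r\}$, $\omega:\{1,\dots,n\}\to\{1,2\}$, and $a_1,\dots,a_n\in\mathcal{A}$ with $a_j\in\mathcal{A}_{\omega(j),\chi(j)}$ for all $j$. Then \[ \varphi(a_1\cdots a_n)=\varphi(a_W)\prod_{\substack{V\in\pi_{\chi,\omega}\\ \omega(V)=2}}\varphi(a_V), \qquad W=\{j\in\{1,\dots,n\}:\omega(j)=1\}. \]
   Context: A non-commutative space $(\mathcal{A},\varphi)$ is a complex algebra $\mathcal{A}$ with a linear functional $\varphi$, with $\varphi(1)=1$ if $\mathcal{A}$ is unital. For algebras $\mathcal{C}_k$, $\sqcup_k\mathcal{C}_k$ denotes the free product without identification of units, $*_k\mathcal{C}_k$ denotes the free product of unital algebras with identification of units, and $\widetilde{\mathcal{C}}=\mathbb{C}1\oplus\mathcal{C}$ denotes the unitization; one has $\widetilde{\mathcal{C}_1}*\widetilde{\mathcal{C}_2}\cong\widetilde{\mathcal{C}_1\sqcup\mathcal{C}_2}$. Notation. For $n\ge1$ and $\chi:\{1,\dots,n\}\to\{\ell,r\}$ with $\chi^{-1}(\{\ell\})=\{i_1<\dots<i_p\}$ and $\chi^{-1}(\{r\})=\{i_{p+1}>\dots>i_n\}$,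 let $\prec_\chi$ be the total order $i_1\prec_\chi i_2\prec_\chi\cdots\prec_\chi i_n$ on $\{1,\dots,n\}$. A $\chi$-interval is a subset of $\{1,\dots,n\}$ which is an interval for $\prec_\chi$. For $V=\{v_1<\dots<v_s\}\subseteq\{1,\dots,n\}$ write $a_V=a_{v_1}\cdots a_{v_s}$ (product in increasing index order) and $(a_1,\dots,a_n)|_V=(a_{v_1},\dots,a_{v_s})$; by convention a functional applied to the empty product equals $1$. For $\omega:\{1,\dots,n\}\to K$, $\pi_{\chi,\omega}$ is the unique partition of $\{1,\dots,n\}$ into blocks $V_1,\dots,V_m$ such that each $V_k$ is a $\chi$-interval, $\max_{\prec_\chi}V_k\prec_\chi\min_{\prec_\chi}V_{k+1}$, $\omega$ is constant on each $V_k$ (value $\omega(V_k)$), and $\omega(V_k)\ne\omega(V_{k+1})$ for $1\le k\le m-1$. c-bi-free product. Given pairs of unital algebras $(\mathcal{B}_{k,\ell},\mathcal{B}_{k,r})_{k\in K}$ and unital linear functionals $\varphi_k,\psi_k$ on $\mathcal{B}_{k,\ell}*\mathcal{B}_{k,r}$, their c-bi-free product $(\varphi,\psi)=*\!*_k(\varphi_k,\psi_k)$ is the unique pair of unital linear functionals on $*_k(\mathcal{B}_{k,\ell}*\mathcal{B}_{k,r})$ restricting to $\varphi_k,\psi_k$ on each $\mathcal{B}_{k,\ell}*\mathcal{B}_{k,r}$ and such that whenever $n\ge1$, $\chi:\{1,\dots,n\}\to\{\ell,r\}$, $\omega:\{1,\dots,n\}\to K$, $b_j\in\mathcal{B}_{\omega(j),\chi(j)}$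 and $\psi(b_V)=0$ for all $V\in\pi_{\chi,\omega}$, then $\psi(b_1\cdots b_n)=0$ and $\varphi(b_1\cdots b_n)=\prod_{V\in\pi_{\chi,\omega}}\varphi(b_V)$. Bi-monotonic product. Let $(\mathcal{A}_{k,\ell},\mathcal{A}_{k,r})$, $k=1,2$, be pairs of algebras with linear functionals $\varphi_k$ on $\mathcal{A}_{k,\ell}\sqcup\mathcal{A}_{k,r}$. Let $\widetilde{\varphi_k}$ be the unital extension of $\varphi_k$ to $\widetilde{\mathcal{A}_{k,\ell}}*\widetilde{\mathcal{A}_{k,r}}\cong\widetilde{\mathcal{A}_{k,\ell}\sqcup\mathcal{A}_{k,r}}$, and $\delta_1$ the unital functional on $\widetilde{\mathcal{A}_{1,\ell}\sqcup\mathcal{A}_{1,r}}$ vanishing on $\mathcal{A}_{1,\ell}\sqcup\mathcal{A}_{1,r}$. Let $(\widetilde\varphi,\widetilde\psi)$ be the c-bi-free product of $(\widetilde{\varphi_1},\delta_1)$ and $(\widetilde{\varphi_2},\widetilde{\varphi_2})$ for the pairs $(\widetilde{\mathcal{A}_{k,\ell}},\widetilde{\mathcal{A}_{k,r}})$, $k=1,2$. The bi-monotonic product $\varphi_1\rhd\!\!\rhd\varphi_2$ is the restriction of $\widetilde\varphi$ to $(\mathcal{A}_{1,\ell}\sqcup\mathcal{A}_{1,r})\sqcup(\mathcal{A}_{2,\ell}\sqcup\mathcal{A}_{2,r})$. Bi-monotonic independence of two pairs. Pairs of subalgebras $(\mathcal{A}_{1,\ell},\mathcal{A}_{1,r}),(\mathcal{A}_{2,\ell},\mathcal{A}_{2,r})$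 of $(\mathcal{A},\varphi)$ are bi-monotonically independent (in the order $1<2$) if $\varphi\circ\iota=\varphi_1\rhd\!\!\rhd\varphi_2$, where $\iota:(\mathcal{A}_{1,\ell}\sqcup\mathcal{A}_{1,r})\sqcup(\mathcal{A}_{2,\ell}\sqcup\mathcal{A}_{2,r})\to\mathcal{A}$ is the homomorphism induced by the inclusions and $\varphi_k=\varphi\circ\iota|_{\mathcal{A}_{k,\ell}\sqcup\mathcal{A}_{k,r}}$. *)

From HB Require Import structures.
From mathcomp Require Import all_boot all_order all_algebra.
Set Implicit Arguments. Unset Strict Implicit. Unset Printing Implicit Defensive.
Import Order.TTheory GRing.Theory.
Local Open Scope ring_scope.

Inductive side := Lft | Rgt.
Definition is_left (s : side) : bool := if s is Lft then true else false.

Definition is_nonunital_alg (F : fieldType) (A : lmodType F) (mul : A -> A -> A) :=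
  [/\ forall x y z, mul x (mul y z) = mul (mul x y) z,
      forall (c : F) x y z, mul (c *: x + y) z = c *: mul x z + mul y z
    & forall (c : F) x y z, mul z (c *: x + y) = c *: mul z x + mul z y].

Definition is_unit_of (A : Type) (mul : A -> A -> A) (e : A) :=
  forall x, mul e x = x /\ mul x e = x.

Definition is_lin_fun (F : fieldType) (V : lmodType F) (f : V -> F) :=
  forall (c : F) x y, f (c *: x + y) = c * f x + f y.

Definition is_subalg (F : fieldType) (A : lmodType F) (mul : A -> A -> A)
  (P : A -> Prop) :=
  [/\ P 0, forall (c : F) x y, P x -> P y -> P (c *: x + y)
    & forall x y, P x -> P y -> P (mul x y)].

(* functional applied to a product s_1 ... s_k (in that order), with the
   convention that it equals 1 on the empty product *)
Definition wordval (F : fieldType) (A : Type) (mul : A -> A -> A) (f : A -> F)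
  (s : seq A) : F :=
  if s is x :: s' then f (foldl mul x s') else 1.

(* the total order prec_chi, listed increasingly *)
Definition ord_chi (n : nat) (chi : 'I_n -> side) : seq 'I_n :=
  [seq i <- enum 'I_n | is_left (chi i)] ++
  rev [seq i <- enum 'I_n | ~~ is_left (chi i)].

Fixpoint runs (T : Type) (f : T -> nat) (s : seq T) : seq (seq T) :=
  match s with
  | [::] => [::]
  | x :: s' =>
      match runs f s' with
      | (y :: r) :: rest =>
          if f x == f y then (x :: y :: r) :: rest
          else [:: x] :: (y :: r) :: rest
      | _ => [:: [:: x]]
      end
  end.

Definition pi_co (n : nat) (chi : 'I_n -> side) (omega : 'I_n -> nat)
  : seq (seq 'I_n) := runs omega (ord_chi chi).

Definition blockval (n : nat) (omega : 'I_n -> nat) (V : seq 'I_n) : nat :=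
  if V is i :: _ then omega i else 0.

Definition incr (n : nat) (V : seq 'I_n) : seq 'I_n :=
  [seq i <- enum 'I_n | i \in V].

(* ---------- c-bi-free product, realized on a unital algebra B ----------
   Bs k s : the unital subalgebra B_{k,s}; (pt, ps) = (varphi, psi). *)
Definition cbifree_cond (F : fieldType) (B : algType F)
  (Bs : nat -> side -> B -> Prop) (pt ps : B -> F) :=
  forall (n : nat) (chi : 'I_n -> side) (omega : 'I_n -> nat) (b : 'I_n -> B),
    (0 < n)%N ->
    (forall j, Bs (omega j) (chi j) (b j)) ->
    (forall V, V \in pi_co chi omega -> ps (\prod_(j <- incr V) b j) = 0) ->
    ps (\prod_(j < n) b j) = 0 /\
    pt (\prod_(j < n) b j) =
      \prod_(V <- pi_co chi omega) pt (\prod_(j <- incr V) b j).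

(* ---------- bi-monotonic independence of the pairs
   (Asub 1 Lft, Asub 1 Rgt), (Asub 2 Lft, Asub 2 Rgt) w.r.t. phi ----------
   varphi o iota = varphi_1 |>|> varphi_2 is expressed through a realization
   of the c-bi-free product of (tilde varphi_1, delta_1) and
   (tilde varphi_2, tilde varphi_2): a unital algebra B, maps
   jm k s : A_{k,s} -> B (homomorphisms on A_{k,s}, playing the role of the
   free product embeddings of the unitizations), and unital functionals
   pt, ps on B which satisfy the c-bi-free condition w.r.t. the unital
   subalgebras C1 + jm k s (A_{k,s}), restrict on words in A_{1,.} to
   (tilde varphi_1, delta_1) and on words in A_{2,.} to
   (tilde varphi_2, tilde varphi_2), and such that pt agrees with phi on all
   words a_1 ... a_n, a_i in A_{omega i, chi i}. *)
Definition bimonotone_indep (F : fieldType) (A : lmodType F)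
  (mul : A -> A -> A) (phi : A -> F) (Asub : nat -> side -> A -> Prop) :=
  exists (B : algType F) (jm : nat -> side -> A -> B) (pt ps : B -> F),
        (forall k s, (k = 1 \/ k = 2)%N ->
          ((forall (c : F) x y, Asub k s x -> Asub k s y ->
             jm k s (c *: x + y) = c *: jm k s x + jm k s y) /\
          (forall x y, Asub k s x -> Asub k s y ->
             jm k s (mul x y) = jm k s x * jm k s y))) /\
        (is_lin_fun pt /\ is_lin_fun ps /\ pt 1 = 1 /\ ps 1 = 1) /\
        cbifree_cond
          (fun k s b => (k = 1 \/ k = 2)%N /\
                        exists (c : F) x, Asub k s x /\ b = c%:A + jm k s x)
          pt ps /\
      (forall (m : nat) (chi : 'I_m -> side) (x : 'I_m -> A),
           (forall i, Asub 1%N (chi i) (x i)) ->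
           pt (\prod_(i < m) jm 1%N (chi i) (x i)) =
             wordval mul phi [seq x i | i <- enum 'I_m] /\
           ps (\prod_(i < m) jm 1%N (chi i) (x i)) = (m == 0%N)%:R) /\
        (forall (m : nat) (chi : 'I_m -> side) (x : 'I_m -> A),
           (forall i, Asub 2%N (chi i) (x i)) ->
           pt (\prod_(i < m) jm 2%N (chi i) (x i)) =
             wordval mul phi [seq x i | i <- enum 'I_m] /\
           ps (\prod_(i < m) jm 2%N (chi i) (x i)) =
             wordval mul phi [seq x i | i <- enum 'I_m]) /\
        forall (m : nat) (chi : 'I_m -> side) (omega : 'I_m -> nat)
               (x : 'I_m -> A),
          (forall i, omega i = 1%N \/ omega i = 2%N) ->
          (forall i, Asub (omega i) (chi i) (x i)) ->
          wordval mul phi [seq x i | i <- enum 'I_m] =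
            pt (\prod_(i < m) jm (omega i) (chi i) (x i)).

(* Realize varphi as pt in the c-bi-free product (B, pt, ps) of (varphi_1, delta_1) and
   (varphi_2, varphi_2), and compare pt(a_1 ... a_n) with pt(a_W) * prod_V ps(a_V) through
   their difference, the defect.  Take a set m of colour-2 positions and scalars c, and
   replace a_j by a_j + c_j for j in m and by 1 for the other colour-2 positions.  The
   defect of this word is affine in each c_j, with slope the defect for m minus j, so by
   induction on #|m| it does not depend on c.  Choose c so that ps vanishes on the part of
   every block meeting m.  Recolour so that the blocks meeting m keep colour 2 and all the
   other letters get colour 1: the word then satisfies the hypothesis of the c-bi-free
   condition, so pt of it factors over blocks and vanishes, as does the product of the
   ps(a_V).  For m all colour-2 positions and c = 0 this is the theorem, because pt = ps
   on words of the second pair and pt = varphi on words of either pair. *)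

From Pilot Require Import Defs.
From HB Require Import structures.
From mathcomp Require Import all_boot all_order all_algebra ring.
Set Implicit Arguments. Unset Strict Implicit. Unset Printing Implicit Defensive.

Definition headval (T : Type) (f : T -> nat) (V : seq T) : nat :=
  if V is x :: _ then f x else 0.

Section Runs.
Variables (T : Type) (f : T -> nat).

Lemma runs_cons x s :
  runs f (x :: s) =
    if runs f s is (y :: r) :: rest then
      if f x == f y then (x :: y :: r) :: rest else [:: x] :: (y :: r) :: rest
    else [:: [:: x]].
Proof. by []. Qed.

Lemma runs_first x s : exists R rest, runs f (x :: s) = (x :: R) :: rest.
Proof.
rewrite runs_cons; case: (runs f s) => [|[|y r] rest]; try by do 2 eexists.
by case: ifP; do 2 eexists.
Qed.

Lemma runs_cons_head x x' s R rest : f x' = f x ->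
  runs f (x :: s) = (x :: R) :: rest -> runs f (x' :: s) = (x' :: R) :: rest.
Proof.
move=> Ex; rewrite !runs_cons Ex.
by case: (runs f s) => [|[|y r] rest'] /=; try case: ifP => _; case=> <- <-.
Qed.

Lemma runs_neq_nil s : all (fun V => ~~ nilp V) (runs f s).
Proof.
elim: s => [|x s IH] //=.
by move: IH; case: (runs f s) => [|[|y r] rest] //=; case: ifP => _ /= ->.
Qed.

Lemma flatten_runs s : flatten (runs f s) = s.
Proof.
elim: s => [|x s IH] //=.
move: IH (runs_neq_nil s); case: (runs f s) => [|[|y r] rest] //=.
- by move=> <-.
- by case: ifP => _ <-.
Qed.

Lemma runs_const s :
  all (fun V => all (fun y => f y == headval f V) V) (runs f s).
Proof.
elim: s => [|x s IH] //=.
move: IH; case: (runs f s) => [|[|y r] rest] //=; rewrite ?eqxx //.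
case: ifP => [/eqP Hxy|_] /= /andP [Hr ->]; rewrite andbT.
- by rewrite Hxy !eqxx Hr.
- by rewrite !eqxx Hr.
Qed.

Lemma runs_sorted s : sorted (fun V W => headval f V != headval f W) (runs f s).
Proof.
elim: s => [|x s IH] //=.
move: IH; case: (runs f s) => [|[|y r] rest] //=.
case: ifP => /eqP Hxy /=.
- by case: rest => [|W rest] //=; rewrite Hxy.
- by move=> ->; rewrite andbT; apply/eqP.
Qed.

End Runs.

Lemma runs_coarsen (T : Type) (f g : T -> nat) (s : seq T) :
  all (fun V => all (fun y => g y == headval g V) V) (runs f s) ->
  runs g s = map flatten (runs (headval g) (runs f s)).
Proof.
elim: s => [|x s IH] // Hall.
case: s IH Hall => [|y s] IH Hall //.
have [R [rest Ef]] := runs_first f y s.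
have [Q [rest' Eg]] := runs_first (headval g) (y :: R) rest.
move: Hall; rewrite runs_cons Ef; case: ifP => [/eqP Exy | Nxy] /andP [HV Hall].
- have Egxy : g x = g y by case/and3P: HV => _ /eqP.
  have Hall' : all (fun V => all (fun y => g y == headval g V) V) ((y :: R) :: rest).
    by apply/andP; split=> //; move: HV => /= /andP [_]; rewrite Egxy.
  rewrite runs_cons IH Ef // Eg (runs_cons_head (x' := x :: y :: R) _ Eg) //=.
  by rewrite Egxy eqxx.
- by rewrite runs_cons IH Ef // [in RHS]runs_cons Eg /=; case: ifP.
Qed.

Lemma mem_runs (T : eqType) (f : T -> nat) s R x : R \in runs f s -> x \in R -> x \in s.
Proof. by move=> HR Hx; rewrite -(flatten_runs f s); apply/flattenP; exists R. Qed.

Lemma uniq_flatten_block (T : eqType) (P : seq (seq T)) V1 V2 y :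
  uniq (flatten P) -> V1 \in P -> V2 \in P -> y \in V1 -> y \in V2 -> V1 = V2.
Proof.
elim: P => [|V P IH] //=; rewrite cat_uniq => /and3P [_ Hdis Hu].
have notin W : W \in P -> y \in W -> y \in V -> False.
  move=> HW HyW HyV; move/hasPn: Hdis => /(_ y).
  by rewrite HyV => /(_ (introT flattenP (ex_intro2 _ _ W HW HyW))).
rewrite !inE => /predU1P [-> | H1] /predU1P [-> | H2] Hy1 Hy2 //.
- by case: (notin V2 H2 Hy2 Hy1).
- by case: (notin V1 H1 Hy1 Hy2).
- exact: IH.
Qed.

Lemma uniq_flatten_nonnil (T : eqType) (P : seq (seq T)) :
  uniq (flatten P) -> all (fun V => ~~ nilp V) P -> uniq P.
Proof.
elim: P => [|V P IH] //=; rewrite cat_uniq => /and3P [_ Hdis Hu] /andP [HV HP].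
rewrite IH // andbT; apply: contra Hdis => VP.
case: V HV VP => [|x V] // _ VP; apply/hasP; exists x; last exact: mem_head.
by apply/flattenP; exists (x :: V); rewrite ?mem_head.
Qed.

Section AlternatingRuns.
Variables (T : eqType) (f h : T -> nat).

Lemma runs_const_size1 k L : sorted (fun x y => f x != f y) L ->
  {in runs h L, forall R, all (fun x => f x == k) R -> size R = 1}.
Proof.
elim: L => [|x L IH] // HL R.
case: L IH HL => [|y L] IH HL; first by rewrite mem_seq1 => /eqP ->.
have [R' [rest E]] := runs_first h y L.
move: HL => /andP [Hxy HL]; have IH' := IH HL.
rewrite runs_cons E -E; case: ifP => _; rewrite inE => /orP [/eqP -> | HR] //=.
- by case/and3P=> /eqP Hx /eqP Hy _; rewrite Hx Hy eqxx in Hxy.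
- by apply: IH'; rewrite E inE HR orbT.
- exact: IH'.
Qed.

Lemma runs_lonely x L : sorted (fun x y => f x != f y) L ->
  {in L, forall y, f y = 1 \/ f y = 2} -> {in L, forall y, f y = 1 -> h y = 1} ->
  [:: x] \in runs h L -> f x = 2 -> h x = 1 -> L = [:: x].
Proof.
move=> + Hf12 Hfh; elim: L Hf12 Hfh => [|z L IH] // Hf12 Hfh HL.
case: L IH HL Hf12 Hfh => [|y L] IH HL Hf12 Hfh; first by rewrite mem_seq1 => /eqP [->].
have [R' [rest E]] := runs_first h y L.
move: HL => /andP [Hzy HL] Hx Hx2 Hx1.
have in_tail w : w \in y :: L -> w \in [:: z, y & L] by move=> Hw; rewrite inE Hw orbT.
have IH' := IH (fun w Hw => Hf12 w (in_tail w Hw)) (fun w Hw => Hfh w (in_tail w Hw)) HL.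
have h1_next_to_f2 u w : w \in [:: z, y & L] -> f u = 2 -> f u != f w -> h w = 1.
  move=> Hw -> Hne; apply: Hfh => //.
  by case: (Hf12 w Hw) => // Ew; rewrite Ew in Hne.
move: Hx; rewrite runs_cons E -E.
case: ifP => /eqP Hhzy; rewrite inE => /orP [/eqP [Ex] | HR].
- by [].
- have [Ey EL] := IH' (ltac:(by rewrite E inE HR orbT)) Hx2 Hx1; subst y L.
  by move: E HR => /= [_ <-].
- subst z; case: Hhzy; rewrite Hx1 (h1_next_to_f2 x y) //.
  by rewrite inE mem_head orbT.
- have [Ey EL] := IH' HR Hx2 Hx1; subst y L.
  case: Hhzy; rewrite Hx1 (h1_next_to_f2 x z) ?mem_head //.
  by rewrite eq_sym.
Qed.

End AlternatingRuns.

Import GRing.Theory.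
Local Open Scope ring_scope.

Section AffineProducts.
Variables (R : pzRingType) (B : algType R).

Lemma prod_affine (I : eqType) (r : seq I) (j : I) (f g h : I -> B) (lam : R) :
  uniq r -> j \in r -> {in r, forall i, i != j -> f i = g i /\ f i = h i} ->
  f j = g j + lam *: h j ->
  \prod_(i <- r) f i = \prod_(i <- r) g i + lam *: \prod_(i <- r) h i.
Proof.
elim: r => [|i r IH] //= /andP [Hi Hu] Hj Hoth Hfj; rewrite !big_cons.
have Hoth' : {in r, forall k, k != j -> f k = g k /\ f k = h k}.
  by move=> k Hk; apply: Hoth; rewrite inE Hk orbT.
case: (eqVneq i j) Hj => [Eij _ | Hij]; last first.
  case/predU1P=> [Eji | Hj]; first by rewrite Eji eqxx in Hij.
  have [-> ->] := Hoth i (mem_head _ _) Hij.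
  by rewrite IH // mulrDr scalerAr.
subst i.
have not_j k : k \in r -> k != j by move=> Hk; apply: contraNneq Hi => <-.
have [Eg Eh] : \prod_(k <- r) f k = \prod_(k <- r) g k /\
               \prod_(k <- r) f k = \prod_(k <- r) h k.
  by split; apply: eq_big_seq => k Hk; case: (Hoth' k Hk (not_j k Hk)).
by rewrite Hfj mulrDl -scalerAl -Eg -Eh.
Qed.

End AffineProducts.

Section LinearFunctionals.
Variables (F : fieldType) (V : lmodType F) (p : V -> F).
Hypothesis p_lin : is_lin_fun p.

Lemma lin_funD x y : p (x + y) = p x + p y.
Proof. by have := p_lin 1 x y; rewrite scale1r mul1r. Qed.

Lemma lin_fun0 : p 0 = 0.
Proof. by apply: (addrI (p 0)); rewrite -lin_funD !addr0. Qed.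

Lemma lin_funZ c x : p (c *: x) = c * p x.
Proof. by rewrite -(addr0 (c *: x)) p_lin lin_fun0 addr0. Qed.

End LinearFunctionals.

Lemma lin_on0 (F : fieldType) (A B : lmodType F) (P : A -> Prop) (g : A -> B) :
  P 0 -> (forall c x y, P x -> P y -> g (c *: x + y) = c *: g x + g y) -> g 0 = 0.
Proof.
move=> P0 g_lin; have := g_lin 1 0 0 P0 P0.
by rewrite scaler0 addr0 scale1r => /eqP; rewrite -subr_eq subrr => /eqP <-.
Qed.

Section Centering.
Variables (F : fieldType) (B : algType F) (ps : B -> F).
Hypotheses (ps_lin : is_lin_fun ps) (ps1 : ps 1 = 1).
Variables (I : eqType) (b : I -> B).

Lemma exists_shift (s : seq I) (tau : F) (c0 : I -> F) :
  uniq s -> s != [::] -> exists c : I -> F, {in predC (mem s), c =1 c0} /\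
    ps (\prod_(i <- s) (b i + (c i)%:A)) = tau.
Proof.
elim: s tau c0 => [|i s IH] //= tau c0 /andP [Hi Hu] _.
have [Es | Hs] := eqVneq s [::].
  subst s; exists (fun k => if k == i then tau - ps (b i) else c0 k); split.
    by move=> k; rewrite !inE => /negPf ->.
  rewrite big_seq1 eqxx (lin_funD ps_lin) -[_%:A]/(_ *: 1) (lin_funZ ps_lin) ps1.
  by rewrite mulr1 addrC subrK.
have [c [Hcs Hc]] := IH 1 c0 Hu Hs.
set Pi := \prod_(k <- s) (b k + (c k)%:A).
exists (fun k => if k == i then tau - ps (b i * Pi) else c k); split.
  move=> k; rewrite !inE negb_or => /andP [/negPf -> Hk]; exact: Hcs.
rewrite big_cons eqxx.
have -> : \prod_(k <- s) (b k + (if k == i then tau - ps (b i * Pi) else c k)%:A) = Pi.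
  apply: eq_big_seq => k Hk; have /negPf -> // : k != i.
  by apply: contraNneq Hi => <-.
rewrite mulrDl (lin_funD ps_lin) mulr_algl (lin_funZ ps_lin) Hc mulr1.
by rewrite addrC subrK.
Qed.

Lemma exists_centering (P : seq (seq I)) (sel : seq I -> seq I) :
  uniq (flatten P) -> (forall V, uniq (sel V)) -> (forall V, {subset sel V <= V}) ->
  exists c : I -> F, {in P, forall V, sel V != [::] ->
    ps (\prod_(i <- sel V) (b i + (c i)%:A)) = 0}.
Proof.
move=> + sel_uniq sel_sub; elim: P => [|V P IH] /=; first by exists (fun _ => 0).
rewrite cat_uniq => /and3P [_ Hdis Hu].
have [c' Hc'] := IH Hu.
have [Hs | Hs] := eqVneq (sel V) [::].
  exists c' => W /predU1P [-> | HW]; [by rewrite Hs | exact: Hc'].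
have [c [Hcs Hc]] := exists_shift 0 c' (sel_uniq V) Hs.
exists c => W /predU1P [-> // | HW] Hne.
rewrite -(Hc' W HW Hne); congr (ps _); apply: eq_big_seq => k Hk.
rewrite Hcs //; apply: contra Hdis => HkV.
apply/hasP; exists k; last exact: sel_sub HkV.
by apply/flattenP; exists W; last exact: sel_sub Hk.
Qed.

End Centering.

Lemma mem_incr n (V : seq 'I_n) i : (i \in incr V) = (i \in V).
Proof. by rewrite mem_filter mem_enum andbT. Qed.

Lemma incr_uniq n (V : seq 'I_n) : uniq (incr V).
Proof. exact: filter_uniq (enum_uniq _). Qed.

Section PartitionPiCo.
Variables (n : nat) (chi : 'I_n -> side) (omega : 'I_n -> nat).

Lemma ord_chi_uniq : uniq (ord_chi chi).
Proof.
rewrite /ord_chi cat_uniq rev_uniq !(filter_uniq _ (enum_uniq _)) andbT /=.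
by apply/hasPn => i; rewrite mem_rev !mem_filter => /andP [/negPf ->].
Qed.

Lemma mem_ord_chi j : j \in ord_chi chi.
Proof.
rewrite mem_cat mem_rev; apply/orP.
by case E: (Defs.is_left (chi j)); [left | right]; rewrite mem_filter E mem_enum.
Qed.

Lemma flatten_pi_co : flatten (pi_co chi omega) = ord_chi chi.
Proof. exact: flatten_runs. Qed.

Lemma uniq_flatten_pi_co : uniq (flatten (pi_co chi omega)).
Proof. by rewrite flatten_pi_co ord_chi_uniq. Qed.

Lemma pi_co_uniq : uniq (pi_co chi omega).
Proof. exact: uniq_flatten_nonnil uniq_flatten_pi_co (runs_neq_nil _ _). Qed.

Lemma pi_co_cover j : exists2 V, V \in pi_co chi omega & j \in V.
Proof. by apply/flattenP; rewrite flatten_pi_co mem_ord_chi. Qed.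

Lemma pi_co_neq_nil V : V \in pi_co chi omega -> ~~ nilp V.
Proof. exact: (allP (runs_neq_nil omega (ord_chi chi))). Qed.

Lemma pi_co_const V y : V \in pi_co chi omega -> y \in V -> omega y = headval omega V.
Proof. by move=> HV Hy; apply/eqP; exact: (allP (allP (runs_const omega _) V HV)). Qed.

Lemma pi_co_sorted :
  sorted (fun V W => headval omega V != headval omega W) (pi_co chi omega).
Proof. exact: runs_sorted. Qed.

End PartitionPiCo.

Section BiMonotoneRealization.
Variables (F : fieldType) (A : lmodType F) (mul : A -> A -> A) (phi : A -> F).
Variables (Asub : nat -> side -> A -> Prop) (B : algType F).
Variables (jm : nat -> side -> A -> B) (pt ps : B -> F).

Definition unitized (k : nat) (s : side) (b : B) : Prop :=
  (k = 1 \/ k = 2)%N /\ exists (c : F) x, Asub k s x /\ b = c%:A + jm k s x.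

Hypothesis Asub0 : forall k s, (k = 1 \/ k = 2)%N -> Asub k s 0.
Hypothesis jm0 : forall k s, (k = 1 \/ k = 2)%N -> jm k s 0 = 0.
Hypotheses (pt_lin : is_lin_fun pt) (ps_lin : is_lin_fun ps) (ps1 : ps 1 = 1).
Hypothesis cbifree : cbifree_cond unitized pt ps.
Hypothesis restr1 : forall (m : nat) (chi : 'I_m -> side) (x : 'I_m -> A),
  (forall i, Asub 1%N (chi i) (x i)) ->
  pt (\prod_(i < m) jm 1%N (chi i) (x i)) = wordval mul phi [seq x i | i <- enum 'I_m] /\
  ps (\prod_(i < m) jm 1%N (chi i) (x i)) = (m == 0%N)%:R.
Hypothesis restr2 : forall (m : nat) (chi : 'I_m -> side) (x : 'I_m -> A),
  (forall i, Asub 2%N (chi i) (x i)) ->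
  pt (\prod_(i < m) jm 2%N (chi i) (x i)) = wordval mul phi [seq x i | i <- enum 'I_m] /\
  ps (\prod_(i < m) jm 2%N (chi i) (x i)) = wordval mul phi [seq x i | i <- enum 'I_m].

Lemma unitized1 k s : (k = 1 \/ k = 2)%N -> unitized k s 1.
Proof.
move=> Hk; split=> //; exists 1, 0; rewrite jm0 // addr0 scale1r.
by split=> //; exact: Asub0.
Qed.

Lemma unitized_shift k s x (c : F) :
  (k = 1 \/ k = 2)%N -> Asub k s x -> unitized k s (jm k s x + c%:A).
Proof. by move=> Hk Hx; split=> //; exists c, x; rewrite addrC. Qed.

Variables (n : nat) (chi : 'I_n -> side) (omega : 'I_n -> nat) (a : 'I_n -> A).
Hypothesis omega12 : forall j, omega j = 1%N \/ omega j = 2%N.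
Hypothesis a_sub : forall j, Asub (omega j) (chi j) (a j).
Hypothesis n_gt0 : (0 < n)%N.

Definition emb (j : 'I_n) : B := jm (omega j) (chi j) (a j).

Lemma emb_reindex k (p : seq 'I_n) : {in p, forall i, omega i = k} ->
  let t := tnth (in_tuple p) in
  [/\ \prod_(i <- p) emb i = \prod_(i < size p) jm k (chi (t i)) (a (t i)),
      forall i, Asub k (chi (t i)) (a (t i))
    & [seq a (t i) | i <- enum 'I_(size p)] = [seq a i | i <- p]].
Proof.
move=> Hp t; have Ht i : omega (t i) = k by rewrite Hp // mem_tnth.
split.
- by rewrite big_tnth; apply: eq_bigr => i _; rewrite /emb Ht.
- by move=> i; rewrite -(Ht i).
- by rewrite (map_comp a t) map_tnth_enum.
Qed.

Lemma emb_word1 (p : seq 'I_n) : {in p, forall i, omega i = 1%N} ->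
  pt (\prod_(i <- p) emb i) = wordval mul phi [seq a i | i <- p] /\
  ps (\prod_(i <- p) emb i) = (p == [::])%:R.
Proof.
move=> /emb_reindex [-> /restr1 [-> ->] ->]; split=> //.
by rewrite size_eq0.
Qed.

Lemma emb_word2 (p : seq 'I_n) : {in p, forall i, omega i = 2%N} ->
  pt (\prod_(i <- p) emb i) = wordval mul phi [seq a i | i <- p] /\
  ps (\prod_(i <- p) emb i) = wordval mul phi [seq a i | i <- p].
Proof. by move=> /emb_reindex [-> /restr2 [-> ->] ->]. Qed.

Definition shifted (m : {set 'I_n}) (c : 'I_n -> F) (j : 'I_n) : B :=
  if omega j == 1%N then emb j else if j \in m then emb j + (c j)%:A else 1.

Lemma pt_eq_ps_shifted m c (r : seq 'I_n) : {in r, forall i, omega i = 2%N} ->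
  pt (\prod_(i <- r) shifted m c i) = ps (\prod_(i <- r) shifted m c i).
Proof.
suff gen p : {in p, forall i, omega i = 2%N} -> {in r, forall i, omega i = 2%N} ->
    pt ((\prod_(i <- p) emb i) * \prod_(i <- r) shifted m c i) =
    ps ((\prod_(i <- p) emb i) * \prod_(i <- r) shifted m c i).
  by move=> Hr; have := gen [::] (fun i => ltac:(by [])) Hr; rewrite big_nil !mul1r.
elim: r p => [|i r IH] p Hp Hr.
  by rewrite big_nil !mulr1; have [-> ->] := emb_word2 Hp.
have Hr' : {in r, forall k, omega k = 2%N} by move=> k Hk; apply: Hr; rewrite inE Hk orbT.
rewrite big_cons /shifted Hr ?mem_head //=; case: (i \in m); last by rewrite mul1r IH.
have Hpi : {in rcons p i, forall k, omega k = 2%N}.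
  by move=> k; rewrite mem_rcons => /predU1P [->|]; [apply: Hr; rewrite mem_head | apply: Hp].
rewrite mulrDl mulr_algl mulrDr -scalerAr mulrA -big_rcons.
by rewrite !(lin_funD pt_lin) !(lin_funD ps_lin) !(lin_funZ pt_lin) !(lin_funZ ps_lin) !IH.
Qed.

Definition pi := pi_co chi omega.

Definition blocks_psi (e : 'I_n -> B) : F :=
  \prod_(V <- pi | headval omega V == 2%N) ps (\prod_(j <- incr V) e j).

Definition defect (e : 'I_n -> B) : F :=
  pt (\prod_(j < n) e j) - pt (\prod_(j < n | omega j == 1%N) emb j) * blocks_psi e.

Lemma defect_eq e e' : e =1 e' -> defect e = defect e'.
Proof.
move=> Ee; rewrite /defect /blocks_psi (eq_bigr _ (fun j _ => Ee j)).
by congr (_ - _ * _); apply: eq_bigr => V _; rewrite (eq_bigr _ (fun j _ => Ee j)).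
Qed.

Lemma defect_affine (e e0 e1 : 'I_n -> B) j lam : omega j = 2%N ->
  (forall i, i != j -> e i = e0 i /\ e i = e1 i) -> e j = e0 j + lam *: e1 j ->
  defect e = defect e0 + lam * defect e1.
Proof.
move=> Hj Hoth Hej.
have prodE (r : seq 'I_n) : uniq r -> j \in r ->
    ps (\prod_(i <- r) e i) = ps (\prod_(i <- r) e0 i) + lam * ps (\prod_(i <- r) e1 i) /\
    pt (\prod_(i <- r) e i) = pt (\prod_(i <- r) e0 i) + lam * pt (\prod_(i <- r) e1 i).
  move=> Hu Hjr; rewrite (prod_affine Hu Hjr (fun i _ => Hoth i) Hej).
  by rewrite (lin_funD ps_lin) (lin_funD pt_lin) (lin_funZ ps_lin) (lin_funZ pt_lin).
have [_ ptE] := prodE _ (index_enum_uniq _) (mem_index_enum j).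
have [Vj HVj jVj] := pi_co_cover chi omega j.
have blocksE : blocks_psi e = blocks_psi e0 + lam * blocks_psi e1.
  rewrite /blocks_psi -!(big_filter pi).
  have Hu : uniq [seq V <- pi | headval omega V == 2%N] by rewrite filter_uniq ?pi_co_uniq.
  have HVj' : Vj \in [seq V <- pi | headval omega V == 2%N].
    by rewrite mem_filter -(pi_co_const HVj jVj) Hj eqxx.
  apply: (prod_affine (B := F^o) Hu HVj') => [V | ]; last first.
    by have [-> _] := prodE _ (incr_uniq Vj) (etrans (mem_incr _ _) jVj).
  rewrite mem_filter => /andP [_ HV] HVVj.
  have jV : j \notin V.
    apply: contra HVVj => jV.
    by rewrite (uniq_flatten_block (uniq_flatten_pi_co _ _) HV HVj jV jVj).
  have Hi i : i \in V -> e i = e0 i /\ e i = e1 i.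
    by move=> iV; apply: Hoth; apply: contraNneq jV => <-.
  by split; congr (ps _); apply: eq_big_seq => i; rewrite mem_incr => /Hi [].
rewrite /defect blocksE ptE.
ring.
Qed.

Lemma defect_shifted_update (m : {set 'I_n}) (c : 'I_n -> F) (j : 'I_n) (d : F) :
  (forall i, i \in m -> omega i = 2%N) ->
  (j \in m -> forall c', defect (shifted (m :\ j) c') = 0) ->
  defect (shifted m c) = defect (shifted m (fun i => if i == j then d else c i)).
Proof.
move=> Hm IH; set c' := fun i => _.
have [mj | jNm] := boolP (j \in m); last first.
  apply: defect_eq => i; rewrite /shifted /c'.
  by case: (eqVneq i j) => [->|//]; rewrite (negPf jNm).
have Hj := Hm j mj.
rewrite (@defect_affine _ (shifted m c') (shifted (m :\ j) c) j (c j - d)) //.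
- by rewrite IH // mulr0 addr0.
- by move=> i Hij; rewrite /shifted /c' in_setD1 (negPf Hij).
- by rewrite /shifted /c' Hj eqxx mj setD11 -addrA -scalerDl (addrC d) subrK.
Qed.

Lemma defect_shifted_indep (m : {set 'I_n}) : (forall i, i \in m -> omega i = 2%N) ->
  (forall j, j \in m -> forall c, defect (shifted (m :\ j) c) = 0) ->
  forall c c', defect (shifted m c) = defect (shifted m c').
Proof.
move=> Hm IH c c'.
have mix (r : seq 'I_n) :
    defect (shifted m c) = defect (shifted m (fun i => if i \in r then c' i else c i)).
  elim: r => [|j r IHr]; first exact: defect_eq.
  rewrite IHr (@defect_shifted_update m _ j (c' j) Hm (IH j)).
  by apply: defect_eq => i; rewrite /shifted inE; case: (eqVneq i j) => [->|].
by rewrite (mix (enum 'I_n)); apply: defect_eq => i; rewrite /shifted mem_enum.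
Qed.

Lemma defect_shifted0 c : defect (shifted set0 c) = 0.
Proof.
rewrite /defect; suff [-> ->] :
    \prod_(j < n) shifted set0 c j = \prod_(j < n | omega j == 1%N) emb j /\
    blocks_psi (shifted set0 c) = 1 by rewrite mulr1 subrr.
split.
  by rewrite [RHS]big_mkcond; apply: eq_bigr => j _; rewrite /shifted in_set0; case: ifP.
rewrite /blocks_psi big_seq_cond; apply: big1 => V /andP [HV /eqP HV2].
rewrite big1_seq ?ps1 // => i /andP [_]; rewrite mem_incr => iV.
by rewrite /shifted in_set0 (pi_co_const HV iV) HV2.
Qed.

Definition meets (m : {set 'I_n}) (V : seq 'I_n) : bool := has (fun i => i \in m) V.

(* The letters outside the blocks meeting m are colour-1 letters or 1, and 1 lies in
   every unitized subalgebra. *)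
Definition coarse (m : {set 'I_n}) (j : 'I_n) : nat :=
  if has (fun V => (j \in V) && meets m V) pi then 2%N else 1%N.

Lemma coarse_block m V y :
  V \in pi -> y \in V -> coarse m y = if meets m V then 2%N else 1%N.
Proof.
move=> HV Hy; rewrite /coarse; congr (if _ then _ else _).
apply/hasP/idP => [[W HW /andP [HyW HmW]] | HmV]; last by exists V; rewrite ?Hy.
by rewrite (uniq_flatten_block (uniq_flatten_pi_co _ _) HV HW Hy HyW).
Qed.

Lemma headval_coarse m V :
  V \in pi -> headval (coarse m) V = if meets m V then 2%N else 1%N.
Proof.
move=> HV; have := pi_co_neq_nil HV.
by case: V HV => [|x r] // HV _; exact: coarse_block HV (mem_head _ _).
Qed.

Lemma pi_co_coarse m : pi_co chi (coarse m) = map flatten (runs (headval (coarse m)) pi).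
Proof.
apply: runs_coarsen; apply/allP => V HV; apply/allP => y Hy.
by rewrite (coarse_block m HV Hy) (headval_coarse m HV).
Qed.

Section Centered.
Variables (m : {set 'I_n}) (j1 : 'I_n) (c : 'I_n -> F).
Hypotheses (m_omega2 : forall j, j \in m -> omega j = 2%N) (j1m : j1 \in m).
Hypothesis centered : {in pi, forall V, [seq i <- incr V | i \in m] != [::] ->
  ps (\prod_(i <- [seq i <- incr V | i \in m]) (emb i + (c i)%:A)) = 0}.

Lemma meets_omega2 V : V \in pi -> meets m V -> headval omega V = 2%N.
Proof. by move=> HV /hasP [i Hi Him]; rewrite -(pi_co_const HV Hi) m_omega2. Qed.

Lemma coarse_run_cases R : R \in runs (headval (coarse m)) pi ->
  (exists2 V, R = [:: V] & meets m V) \/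
  (all (fun V => ~~ meets m V) R /\ has (fun V => headval omega V == 1%N) R).
Proof.
move=> HR; have Rpi W : W \in R -> W \in pi := mem_runs HR.
have := allP (runs_neq_nil _ _) R HR; case: R HR Rpi => [|V1 R1] // HR Rpi _.
have meetsE W : W \in V1 :: R1 -> meets m W = meets m V1.
  move=> HW; have /eqP := allP (allP (runs_const _ _) _ HR) W HW.
  by rewrite /= !headval_coarse ?Rpi ?mem_head //; do 2 case: (meets m _).
have single : all (fun W => headval omega W == 2%N) (V1 :: R1) -> R1 = [::].
  by move/(runs_const_size1 (pi_co_sorted chi omega) HR); case: R1 {HR Rpi meetsE}.
case HmV1: (meets m V1).
  left; exists V1 => //; congr (_ :: _); apply/single/allP => W HW.
  by rewrite meets_omega2 ?Rpi // meetsE // HmV1.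
right; split; first by apply/allP => W /meetsE ->; rewrite HmV1.
(* A run of deleted colour-2 blocks has no colour-1 neighbour, so it would be all of pi;
   but the block of j1 meets m. *)
apply/negPn/negP => /hasPn noW1.
have W2 W : W \in V1 :: R1 -> headval omega W = 2%N.
  move=> HW; have := pi_co_neq_nil (Rpi W HW); have := noW1 W HW.
  by case: W HW => [|x r] //= HW; case: (omega12 x) => ->.
have ER1 := single (introT allP (fun W HW => introT eqP (W2 W HW))); subst R1.
have [V0 HV0 j1V0] := pi_co_cover chi omega j1.
have : pi = [:: V1].
  apply: (runs_lonely (pi_co_sorted chi omega) _ _ HR (W2 V1 (mem_head _ _))).
  - move=> W /pi_co_neq_nil; case: W => [|x r] //= _; exact: omega12.
  - move=> W HW HW1; rewrite headval_coarse //; case: ifP => // /(meets_omega2 HW).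
    by rewrite HW1.
  - by rewrite headval_coarse ?Rpi ?mem_head // HmV1.
move=> Epi; move: HV0; rewrite -/pi Epi mem_seq1 => /eqP EV0; subst V0.
by move: HmV1; rewrite /meets; move/negbT/hasPn => /(_ j1 j1V0); rewrite j1m.
Qed.

Lemma shifted_unitized j : unitized (coarse m j) (chi j) (shifted m c j).
Proof.
have [V HV jV] := pi_co_cover chi omega j.
rewrite /shifted; case: (omega12 j) => Hj; rewrite Hj /=.
  have -> : coarse m j = 1%N.
    rewrite (coarse_block m HV jV); case: ifP => // /(meets_omega2 HV).
    by rewrite -(pi_co_const HV jV) Hj.
  rewrite /emb Hj -[jm _ _ _]addr0 -(scale0r (1 : B)).
  by apply: unitized_shift; [left | rewrite -Hj].
case: ifP => jin.
  have -> : coarse m j = 2%N.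
    by rewrite (coarse_block m HV jV) (_ : meets m V) //; apply/hasP; exists j.
  by rewrite /emb Hj; apply: unitized_shift; [right | rewrite -Hj].
by apply: unitized1; rewrite (coarse_block m HV jV); case: (meets m V); [right | left].
Qed.

Lemma psi_shifted_meets V : V \in pi -> meets m V ->
  ps (\prod_(i <- incr V) shifted m c i) = 0.
Proof.
move=> HV HmV; rewrite -(centered HV); last first.
  by rewrite -has_filter; case/hasP: HmV => i iV im; apply/hasP; exists i; rewrite ?mem_incr.
congr (ps _); rewrite big_filter [RHS]big_mkcond; apply: eq_big_seq => i.
by rewrite mem_incr => iV; rewrite /shifted (pi_co_const HV iV) meets_omega2.
Qed.

Lemma psi_shifted_coarse V : V \in pi_co chi (coarse m) ->
  ps (\prod_(i <- incr V) shifted m c i) = 0.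
Proof.
rewrite pi_co_coarse => /mapP [R HR ->].
case: (coarse_run_cases HR) => [[W ER HmW] | [noM /hasP [W HW /eqP W1]]].
  subst R; rewrite /= cats0; apply: psi_shifted_meets => //.
  exact: mem_runs HR (mem_head _ _).
set p := [seq i <- incr (flatten R) | omega i == 1%N].
have p1 : {in p, forall i, omega i = 1%N} by move=> i; rewrite mem_filter => /andP [/eqP].
have -> : \prod_(i <- incr (flatten R)) shifted m c i = \prod_(i <- p) emb i.
  rewrite /p big_filter [RHS]big_mkcond; apply: eq_big_seq => i.
  rewrite mem_incr => /flattenP [U HU iU].
  have iNm : i \notin m by apply: contraNN (allP noM U HU) => im; apply/hasP; exists i.
  by rewrite /shifted (negPf iNm); case: ifP.
have [_ ->] := emb_word1 p1.
have WR := mem_runs HR HW; have := pi_co_neq_nil WR.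
case: W HW W1 WR => [|x W] // HW /= x1 WR _.
suff : x \in p by case: (p =P [::]) => // ->.
by rewrite mem_filter x1 eqxx mem_incr; apply/flattenP; exists (x :: W); rewrite ?mem_head.
Qed.

Lemma meets_mem_coarse V : V \in pi -> meets m V -> V \in pi_co chi (coarse m).
Proof.
move=> HV HmV; have /flattenP [R HR VR] : V \in flatten (runs (headval (coarse m)) pi).
  by rewrite flatten_runs.
rewrite pi_co_coarse; apply/mapP; exists R => //.
case: (coarse_run_cases HR) => [[W EW _] | [noM _]].
  by move: VR; rewrite EW mem_seq1 => /eqP ->; rewrite /= cats0.
by move/allP: noM => /(_ V VR); rewrite HmV.
Qed.

Lemma defect_shifted_centered : defect (shifted m c) = 0.
Proof.
have [V0 HV0 j1V0] := pi_co_cover chi omega j1.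
have HmV0 : meets m V0 by apply/hasP; exists j1.
have psiV0 := psi_shifted_meets HV0 HmV0.
rewrite /defect; apply/eqP; rewrite subr_eq0 /blocks_psi; apply/eqP.
have [_ ->] := cbifree n_gt0 shifted_unitized psi_shifted_coarse.
have /eqP -> : \prod_(V <- pi | headval omega V == 2%N)
    ps (\prod_(j <- incr V) shifted m c j) == 0.
  by rewrite prodf_seq_eq0; apply/hasP; exists V0; rewrite ?meets_omega2 ?psiV0 ?eqxx.
apply/eqP; rewrite mulr0 prodf_seq_eq0; apply/hasP.
exists V0; first exact: meets_mem_coarse.
rewrite pt_eq_ps_shifted ?psiV0 ?eqxx // => i; rewrite mem_incr => iV0.
by rewrite (pi_co_const HV0 iV0) meets_omega2.
Qed.

End Centered.

Lemma defect_shifted_vanish (m : {set 'I_n}) c :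
  (forall j, j \in m -> omega j = 2%N) -> defect (shifted m c) = 0.
Proof.
have [k] := ubnP #|m|; elim: k => // k IH in m c *; rewrite ltnS => Hk Hm.
have [-> | [j1 j1m]] := set_0Vmem m; first exact: defect_shifted0.
have IHm j : j \in m -> forall c', defect (shifted (m :\ j) c') = 0.
  move=> jin c'; apply: IH => [|i]; last by rewrite in_setD1 => /andP [_ /Hm].
  by move: Hk; rewrite (cardsD1 j m) jin.
set sel := fun V => [seq i <- incr V | i \in m].
have sel_sub V : {subset sel V <= V} by move=> i; rewrite mem_filter mem_incr => /andP [].
have [cs centered] := exists_centering ps_lin ps1 emb (uniq_flatten_pi_co chi omega)
  (fun V => filter_uniq _ (incr_uniq V)) sel_sub.
by rewrite (defect_shifted_indep Hm IHm c cs); exact: defect_shifted_centered Hm j1m centered.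
Qed.

Lemma pt_emb_factor :
  pt (\prod_(j < n) emb j) =
    wordval mul phi [seq a i | i <- [seq j <- enum 'I_n | omega j == 1%N]] *
    \prod_(V <- pi | headval omega V == 2%N) wordval mul phi [seq a i | i <- incr V].
Proof.
have m2 j : j \in [set j | omega j == 2%N] -> omega j = 2%N by rewrite inE => /eqP.
have := defect_shifted_vanish (fun _ => 0) m2.
rewrite (@defect_eq _ emb) => [|j]; last first.
  by rewrite /shifted inE scale0r addr0; case: (omega12 j) => ->.
move=> /eqP; rewrite subr_eq0 => /eqP ->.
congr (_ * _).
  have W1 : {in [seq j <- enum 'I_n | omega j == 1%N], forall j, omega j = 1%N}.
    by move=> j; rewrite mem_filter => /andP [/eqP].
  by rewrite -(emb_word1 W1).1 big_filter [index_enum _]unlock -enumT.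
rewrite /blocks_psi big_seq_cond [RHS]big_seq_cond; apply: eq_bigr => V /andP [HV /eqP V2].
have V2' : {in incr V, forall i, omega i = 2%N}.
  by move=> i; rewrite mem_incr => iV; rewrite (pi_co_const HV iV).
exact: (emb_word2 V2').2.
Qed.

End BiMonotoneRealization.

Theorem lemma2p5 (F : fieldType) (A : lmodType F) (mul : A -> A -> A)
  (Halg : is_nonunital_alg mul)
  (phi : A -> F) (Hphi : is_lin_fun phi)
  (Hphi1 : forall e, is_unit_of mul e -> phi e = 1)
  (Asub : nat -> side -> A -> Prop)
  (Hsub : forall k s, (k = 1 \/ k = 2)%N -> is_subalg mul (Asub k s))
  (Hind : bimonotone_indep mul phi Asub)
  (n : nat) (Hn : (0 < n)%N) (chi : 'I_n -> side) (omega : 'I_n -> nat)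
  (Homega : forall j, omega j = 1%N \/ omega j = 2%N)
  (a : 'I_n -> A) (Ha : forall j, Asub (omega j) (chi j) (a j)) :
  wordval mul phi [seq a i | i <- enum 'I_n] =
    wordval mul phi [seq a i | i <- [seq j <- enum 'I_n | omega j == 1%N]] *
    \prod_(V <- pi_co chi omega | blockval omega V == 2%N)
       wordval mul phi [seq a i | i <- incr V].
Proof.
case: Hind => B [jm [pt [ps [Hjm [[Hpt [Hps [_ ps1]]] [Hcb [H1 [H2 Hlast]]]]]]]].
have Asub0 k s : (k = 1 \/ k = 2)%N -> Asub k s 0 by move=> /(Hsub k s) [].
have jm0 k s : (k = 1 \/ k = 2)%N -> jm k s 0 = 0.
  by move=> Hk; apply: lin_on0 (Asub0 k s Hk) (Hjm k s Hk).1.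
rewrite (Hlast n chi omega a Homega Ha).
exact: (pt_emb_factor Asub0 jm0 Hpt Hps ps1 Hcb H1 H2 Homega Ha Hn).
Qed.
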